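(* For any integers $n\ge1$ and $0<r\le n$, there is an $r$-covering code $C\subseteq2^n$ with $$|C|=S:=\left\lceil\ln(2)(n+1)\frac{2^n}{V(n,r)}\right\rceil$$ such that for every integer $q\in[r,n]$ and every $\tau\in2^n$, $$|B_q(\tau)\cap C|<S_q:=\left\lceil5(n+1)\frac{V(n,q)}{V(n,r)}\right\rceil.$$
   Context: For $\sigma,\tau\in2^n$, $\Delta(\sigma,\tau)$ is the Hamming distance (number of differing positions), $B_q(\tau)=\{\sigma\in2^n:\Delta(\sigma,\tau)\le q\}$ and $V(n,q)=|B_q(\tau)|=\sum_{i\le q}\binom ni$. A code $C\subseteq2^n$ is $r$-covering if for every $\tau\in2^n$ there is $\sigma\in C$ with $\Delta(\tau,\sigma)\le r$. *)

From HB Require Import structures.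
From mathcomp Require Import all_boot all_order all_algebra.
From mathcomp Require Import all_classical all_reals all_analysis.
Set Implicit Arguments. Unset Strict Implicit. Unset Printing Implicit Defensive.

Definition word (n : nat) := {ffun 'I_n -> bool}.

Definition hdist (n : nat) (s t : word n) : nat := #|[set i | s i != t i]|.

Definition hball (n q : nat) (tau : word n) : {set word n} :=
  [set s | hdist s tau <= q].

Definition V (n q : nat) : nat := \sum_(i < q.+1) 'C(n, i).

Definition rcovering (n r : nat) (C : {set word n}) : Prop :=
  forall tau : word n, exists2 s, s \in C & hdist tau s <= r.

From HB Require Import structures.
From mathcomp Require Import all_boot all_order all_algebra.
From mathcomp Require Import all_classical all_reals all_analysis.
From mathcomp Require Import zify ring lra.
(* Re-imported so that the finite-set lemma names shadow their classical_sets homonyms. *)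
From mathcomp Require Import fintype finset.
Import Order.TTheory GRing.Theory Num.Theory.
Set Implicit Arguments. Unset Strict Implicit. Unset Printing Implicit Defensive.

(* Random coding, turned into counting: among the S-element subsets of 2^n, with
   N = 2^n, those missing the ball B_r(tau) form a fraction at most
   (1 - V(n,r)/N)^S <= exp(-S V(n,r)/N) <= 2^-(n+1), and those meeting B_q(tau) in
   at least k = S_q points a fraction at most
   'C(S,k) (V(n,q)/N)^k <= 4^-k exp(4 S V(n,q)/N) <= e^4 2^-(6(n+1)).
   Summing over the 2^n centres, resp. the at most (n+1) 2^n pairs (q, tau), both
   totals stay below one half, so some S-subset is neither. *)

Lemma bin_ratio_le (m N s : nat) : m <= N -> 'C(m, s) * N ^ s <= 'C(N, s) * m ^ s.
Proof.
move=> mN; elim: s => [|s IHs]; first by rewrite !bin0.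
rewrite -(leq_pmul2l (ltn0Sn s)) !mulnA !mul_bin_left !expnS.
have shrink : (m - s) * N <= (N - s) * m by nia.
have := leq_mul shrink IHs.
by rewrite -!mulnA !(mulnCA N) !(mulnCA m) !(mulnCA (m - s)) !(mulnCA (N - s)) !mulnA.
Qed.

Lemma mul_bin_bin (N S k : nat) : k <= S -> S <= N ->
  'C(N, S) * 'C(S, k) = 'C(N, k) * 'C(N - k, S - k).
Proof.
move=> kS SN; have kN := leq_trans kS SN.
apply/eqP; rewrite -(eqn_pmul2r (_ : 0 < k`! * (S - k)`! * (N - S)`!)); last first.
  by rewrite !muln_gt0 !fact_gt0.
have e : N - S = N - k - (S - k) by lia.
have := bin_fact kS; have := bin_fact SN; have := bin_fact kN.
have := bin_fact (leq_sub2r k SN); rewrite -e.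
move=> e4 e3 e2 e1; apply/eqP.
by transitivity N`!; [rewrite -e2 -e1 | rewrite -e3 -e4]; ring.
Qed.

Lemma leq_card_bigcup (I T : finType) (P : pred I) (F : I -> {set T}) :
  #|\bigcup_(i | P i) F i| <= \sum_(i | P i) #|F i|.
Proof.
elim/big_ind2: _ => [|m A p B Am Bp|]; rewrite ?cards0 //.
exact: leq_trans (leq_card_setU A B) (leq_add Am Bp).
Qed.

Lemma card_draws_disjoint (T : finType) (A : {set T}) S :
  #|[set C : {set T} | [disjoint C & A] & #|C| == S]| = 'C(#|~: A|, S).
Proof. by rewrite -cards_draws; apply: eq_card => C; rewrite !inE disjoints_subset. Qed.

Lemma card_draws_supset (T : finType) (D : {set T}) S :
  #|[set C : {set T} | D \subset C & #|C| == S]| <= 'C(#|~: D|, S - #|D|).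
Proof.
rewrite -cards_draws -(@card_in_imset _ _ (fun C => C :\: D)).
  apply/subset_leq_card/subsetP => E /imsetP[C]; rewrite inE => /andP[DC /eqP <-] ->.
  by rewrite inE setDE subsetIr -setDE cardsDS ?eqxx.
move=> C1 C2; rewrite !inE => /andP[DC1 _] /andP[DC2 _] /setP eqCD; apply/setP => x.
have := eqCD x; rewrite !inE.
by case: (boolP (x \in D)) => [xD _ | _ //]; rewrite (subsetP DC1) ?(subsetP DC2).
Qed.

Lemma card_draws_meet (T : finType) (B : {set T}) S k : k <= S ->
  #|[set C : {set T} | k <= #|B :&: C| & #|C| == S]| <= 'C(#|B|, k) * 'C(#|T| - k, S - k).
Proof.
move=> kS; pose Dk := [set D : {set T} | D \subset B & #|D| == k].
pose supsets (D : {set T}) := [set C : {set T} | D \subset C & #|C| == S].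
have cover : [set C | k <= #|B :&: C| & #|C| == S] \subset \bigcup_(D in Dk) supsets D.
  apply/subsetP => C; rewrite inE => /andP[kBC cS].
  have : 0 < #|[set D : {set T} | D \subset B :&: C & #|D| == k]|.
    by rewrite cards_draws bin_gt0.
  case/card_gt0P => D; rewrite inE subsetI => /andP[/andP[DB DC] cD].
  by apply/bigcupP; exists D; rewrite inE ?DB ?DC ?cD.
apply: leq_trans (subset_leq_card cover) _; apply: leq_trans (leq_card_bigcup _ _) _.
rewrite -cards_draws -sum_nat_const; apply: leq_sum => D; rewrite inE => /andP[_ /eqP cD].
by have := card_draws_supset D S; rewrite [#|~: D|]cardsCs setCK cD.
Qed.

Lemma card_draws_leq (T : finType) q :
  #|[set A : {set T} | #|A| <= q]| = \sum_(i < q.+1) 'C(#|T|, i).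
Proof.
elim: q => [|q IHq].
  by rewrite big_ord1 -card_draws; apply: eq_card => A; rewrite !inE leqn0.
have -> : [set A : {set T} | #|A| <= q.+1] =
    [set A : {set T} | #|A| <= q] :|: [set A : {set T} | #|A| == q.+1].
  by apply/setP => A; rewrite !inE leq_eqVlt ltnS orbC.
rewrite cardsU big_ord_recr /= -IHq -card_draws -[RHS]subn0; congr (_ - _).
apply/eqP; rewrite cards_eq0; apply/eqP/setP => A.
by rewrite !inE andbC; case: eqP => // ->; rewrite ltnn.
Qed.

Lemma card_word n : #|word n| = 2 ^ n.
Proof. by rewrite card_ffun card_bool card_ord. Qed.

Lemma hdistC n (s t : word n) : hdist s t = hdist t s.
Proof. by apply: eq_card => i; rewrite !inE eq_sym. Qed.

Lemma card_hball n q (tau : word n) : #|hball q tau| = V n q.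
Proof.
pose flip (A : {set 'I_n}) : word n := [ffun i => (i \in A) (+) tau i].
have hdist_flip A : hdist (flip A) tau = #|A|.
  rewrite /hdist (_ : [set i | _] = A) //; apply/setP => i.
  by rewrite !inE ffunE; case: (i \in A); case: (tau i).
have flip_inj : injective flip.
  move=> A B /ffunP eqAB; apply/setP => i; have := eqAB i; rewrite !ffunE.
  by case: (i \in A); case: (i \in B); case: (tau i).
have -> : hball q tau = flip @: [set A : {set 'I_n} | #|A| <= q].
  apply/setP => s; rewrite inE; apply/idP/imsetP => [hs | [A]]; last first.
    by rewrite inE => qA ->; rewrite hdist_flip.
  exists [set i | s i != tau i]; first by rewrite inE.
  by apply/ffunP => i; rewrite ffunE inE; case: (s i); case: (tau i).
by rewrite card_imset // card_draws_leq card_ord.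
Qed.

Lemma V_mono n a b : a <= b -> V n a <= V n b.
Proof.
move=> ab; pose tau : word n := [ffun => false].
rewrite -(card_hball a tau) -(card_hball b tau); apply/subset_leq_card/subsetP => s.
by rewrite !inE => /leq_trans; apply.
Qed.

Lemma V_le_exp2 n q : V n q <= 2 ^ n.
Proof. by rewrite -(card_hball q [ffun => false]) -card_word max_card. Qed.

Lemma succ_le_V n r : 0 < r -> n.+1 <= V n r.
Proof.
move=> r0; apply: leq_trans (V_mono n r0).
by rewrite /V !big_ord_recr big_ord0 /= bin0 bin1.
Qed.

Section Estimates.
Variable R : realType.
Local Open Scope ring_scope.
Local Notation L := (ln (2 : R)).

Lemma ln2_gt0 : 0 < L. Proof. by rewrite ln_gt0 // ltr1n. Qed.

Lemma expR_natmul_ln2 (m : nat) : expR (m%:R * L) = (2 ^ m)%:R.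
Proof. by rewrite expRM_natl lnK ?posrE // natrX. Qed.

Lemma expR4_le : expR (4 : R) <= (2 ^ 8)%:R.
Proof.
have half_le : 2^-1 <= expR (- 2^-1 : R) by apply: le_trans (expR_ge1Dx _); lra.
have sqrte_le2 : expR (2^-1 : R) <= 2.
  rewrite -[2^-1 : R]opprK expRN -[X in _ <= X]invrK.
  by rewrite lef_pV2 ?posrE ?expR_gt0 // invr_gt0.
rewrite (_ : (4 : R) = 8%:R * 2^-1); last by field.
by rewrite expRM_natl natrX lerXn2r ?nnegrE ?expR_ge0.
Qed.

Lemma bin_exp_le_expR (S k : nat) (y : R) : (k <= S)%N -> 0 <= y ->
  'C(S, k)%:R * y ^+ k <= expR (S%:R * y).
Proof.
move=> kS y0; apply: (@le_trans _ _ ((1 + y) ^+ S)).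
  rewrite addrC exprD1n (bigD1 (Ordinal (kS : k < S.+1)%N)) //= mulrC mulr_natr lerDl.
  by apply: sumr_ge0 => i _; rewrite mulrn_wge0 // exprn_ge0.
by rewrite expRM_natl lerXn2r ?nnegrE ?addr_ge0 ?expR_ge0 // expR_ge1Dx.
Qed.

Lemma expr1B_exp2_le1 (x : R) (S m : nat) : 0 <= x <= 1 -> L * m%:R <= S%:R * x ->
  (1 - x) ^+ S * (2 ^ m)%:R <= 1.
Proof.
move=> /andP[x0 x1] hS; rewrite -expR_natmul_ln2.
have ltS : (1 - x) ^+ S <= expR (- (S%:R * x)).
  by rewrite -mulrN expRM_natl lerXn2r ?nnegrE ?subr_ge0 ?expR_ge0 // expR_ge1Dx.
apply: le_trans (ler_wpM2r (expR_ge0 _) ltS) _.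
by rewrite -expRD expR_le1 mulrC; lra.
Qed.

Lemma bin_exp_tail_le (S k m : nat) (u t : R) : (k <= S)%N -> 0 <= u <= 1 -> 1 <= t ->
  S%:R * u <= L * m%:R * t + u -> 5 * m%:R * t <= k%:R ->
  'C(S, k)%:R * u ^+ k * (2 ^ (6 * m))%:R <= (2 ^ 8)%:R.
Proof.
move=> kS /andP[u0 u1] t1 hS hk.
have L0 := ln2_gt0; have m0 : 0 <= m%:R :> R by [].
have four_pow : (4 : R) ^+ k = expR ((2 * k)%N%:R * L).
  by rewrite expR_natmul_ln2 expnM natrX.
have tail : 'C(S, k)%:R * u ^+ k * expR ((2 * k)%N%:R * L) <= expR (S%:R * (4 * u)).
  rewrite -four_pow -mulrA -exprMn [u * 4]mulrC.
  by apply: bin_exp_le_expR; rewrite ?mulr_ge0.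
rewrite -expR_natmul_ln2; apply: le_trans expR4_le.
rewrite -(ler_pM2r (expR_gt0 ((2 * k)%N%:R * L))) mulrAC.
apply: le_trans (ler_wpM2r (expR_ge0 _) tail) _.
rewrite -!expRD ler_expR !natrM.
have mt : m%:R * L <= m%:R * t * L by rewrite -mulrA ler_wpM2l // ler_peMl // ltW.
have kt : 5 * m%:R * t * L <= k%:R * L by rewrite ler_wpM2r // ltW.
nra.
Qed.

Lemma bin_avoid_le (N S v m : nat) : (0 < v <= N)%N ->
  L * m%:R * N%:R / v%:R <= S%:R -> ('C(N - v, S) * 2 ^ m <= 'C(N, S))%N.
Proof.
move=> /andP[v0 vN] hS; have N0 : (0 < N)%N := leq_trans v0 vN.
have N0' : 0 < N%:R :> R by rewrite ltr0n.
set x : R := v%:R / N%:R.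
have x01 : 0 <= x <= 1 by rewrite divr_ge0 //= ler_pdivrMr // mul1r ler_nat.
have Lx : L * m%:R <= S%:R * x.
  apply: le_trans (ler_wpM2r (divr_ge0 _ _) hS) => //.
  by rewrite /x le_eqVlt; apply/orP; left; apply/eqP; field; rewrite !gt_eqF // ltr0n.
have ratio : 'C(N - v, S)%:R <= 'C(N, S)%:R * (1 - x) ^+ S :> R.
  rewrite -(ler_pM2r (exprn_gt0 S N0')) -mulrA -exprMn mulrBl divfK ?gt_eqF // mul1r.
  by rewrite -natrB // -!natrX -!natrM ler_nat bin_ratio_le // leq_subr.
rewrite -(ler_nat R) natrM; apply: le_trans (ler_wpM2r (ler0n _ _) ratio) _.
by rewrite -mulrA ler_piMr // expr1B_exp2_le1.
Qed.

Lemma bin_meet_le (N S v b k m : nat) : (0 < v <= b)%N -> (b <= N)%N -> (k <= S <= N)%N ->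
  S%:R < L * m%:R * N%:R / v%:R + 1 -> 5 * m%:R * b%:R / v%:R <= k%:R :> R ->
  ('C(b, k) * 'C(N - k, S - k) * 2 ^ (6 * m) <= 'C(N, S) * 2 ^ 8)%N.
Proof.
move=> /andP[v0 vb] bN /andP[kS SN] hS hk.
have N0 : (0 < N)%N := leq_trans (leq_trans v0 vb) bN.
have N0' : 0 < N%:R :> R by rewrite ltr0n.
have v0' : 0 < v%:R :> R by rewrite ltr0n.
set u : R := b%:R / N%:R; set t : R := b%:R / v%:R.
have u01 : 0 <= u <= 1 by rewrite divr_ge0 //= ler_pdivrMr // mul1r ler_nat.
have t1 : 1 <= t by rewrite ler_pdivlMr // mul1r ler_nat.
have Su : S%:R * u <= L * m%:R * t + u.
  apply: le_trans (ler_wpM2r (divr_ge0 _ _) (ltW hS)) _ => //.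
  by rewrite le_eqVlt; apply/orP; left; apply/eqP; rewrite /u /t; field; rewrite !gt_eqF.
have ratio : 'C(b, k)%:R * 'C(N - k, S - k)%:R <= 'C(N, S)%:R * ('C(S, k)%:R * u ^+ k) :> R.
  rewrite -(ler_pM2r (exprn_gt0 k N0')) -!mulrA -exprMn divfK ?gt_eqF //.
  rewrite -!natrX -!natrM ler_nat !mulnA mul_bin_bin // mulnAC [X in (_ <= X)%N]mulnAC.
  by rewrite leq_mul2r bin_ratio_le ?orbT.
rewrite -(ler_nat R) natrM [X in _ <= X]natrM natrM.
apply: le_trans (ler_wpM2r (ler0n _ _) ratio) _.
by rewrite -mulrA ler_wpM2l // (bin_exp_tail_le (t := t)) // /t mulrA.
Qed.
End Estimates.

Lemma exp_margin_lt n : 0 < n -> 2 ^ 9 * (n.+1 * 2 ^ n) < 2 ^ (6 * n.+1).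
Proof.
move=> n_gt0; apply: (@leq_ltn_trans (2 ^ 9 * (2 ^ n * 2 ^ n))).
  by rewrite leq_mul2l leq_mul2r ltn_expl ?orbT.
by rewrite -!expnD ltn_exp2l //; lia.
Qed.

Section RandomCode.
Variables (R : realType) (n r S : nat) (k : nat -> nat).
Hypotheses (n_gt0 : 0 < n) (r_gt0 : 0 < r).
Local Notation N := (2 ^ n).
Local Notation x := (ln (2 : R) * (n.+1)%:R * N%:R / (V n r)%:R)%R.
Hypotheses (x_le_S : (x <= S%:R)%R) (S_lt_x1 : (S%:R < x + 1)%R).
Hypothesis k_ge : forall q, r <= q <= n ->
  (5 * (n.+1)%:R * (V n q)%:R / (V n r)%:R <= (k q)%:R :> R)%R.

Let draws := [set C : {set word n} | #|C| == S].
Let uncovered tau := [set C : {set word n} | [disjoint C & hball r tau] & #|C| == S].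
Let crowded q tau := [set C : {set word n} | k q <= #|hball q tau :&: C| & #|C| == S].

Let Vr_gt0 : 0 < V n r := leq_trans (ltn0Sn n) (succ_le_V n r_gt0).

Lemma S_le_exp2 : S <= N.
Proof.
have ln2_le1 : (ln (2 : R) <= 1)%R by have := @le_ln1Dx R 1%R ltac:(lra).
have x_le_N : (x <= N%:R)%R.
  rewrite ler_pdivrMr ?ltr0n // [X in (_ <= X)%R]mulrC ler_wpM2r //.
  apply: (@le_trans _ _ (n.+1)%:R%R); last by rewrite ler_nat succ_le_V.
  by rewrite -[X in (_ <= X)%R]mul1r ler_wpM2r.
by rewrite -ltnS -(ltr_nat R) -natr1; apply: lt_le_trans S_lt_x1 _; rewrite lerD2r.
Qed.

Lemma card_uncovered tau : #|uncovered tau| * 2 ^ n.+1 <= #|draws|.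
Proof.
rewrite card_draws_disjoint card_draws card_word [#|~: _|]cardsCs setCK card_hball card_word.
by apply: (bin_avoid_le (R := R)); rewrite ?Vr_gt0 ?V_le_exp2.
Qed.

Lemma card_crowded q tau : r <= q <= n ->
  #|crowded q tau| * 2 ^ (6 * n.+1) <= #|draws| * 2 ^ 8.
Proof.
move=> /andP[rq qn]; have [kS | Sk] := leqP (k q) S; last first.
  rewrite (_ : crowded q tau = set0) ?cards0 //; apply/setP => C; rewrite !inE.
  apply/negP => /andP[kC /eqP cC]; move: Sk; rewrite ltnNge -cC.
  by rewrite (leq_trans kC) // subset_leq_card // subsetIr.
apply: leq_trans (leq_mul (card_draws_meet (hball q tau) kS) (leqnn _)) _.
rewrite card_draws card_hball card_word.
apply: (bin_meet_le (R := R) (v := V n r));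
  rewrite ?Vr_gt0 ?V_mono ?V_le_exp2 ?kS ?S_le_exp2 //.
by rewrite k_ge ?rq.
Qed.

Lemma card_bad_lt :
  \sum_tau #|uncovered tau| + \sum_(p : 'I_n.+1 * word n | r <= p.1) #|crowded p.1 p.2|
    < #|draws|.
Proof.
have draws_gt0 : 0 < #|draws| by rewrite card_draws card_word bin_gt0 S_le_exp2.
have few_uncovered : 2 * \sum_tau #|uncovered tau| <= #|draws|.
  rewrite -(leq_pmul2r (expn_gt0 2 n)) mulnAC -expnS mulnC big_distrl /=.
  apply: leq_trans (_ : _ <= \sum_(tau : word n) #|draws|) _.
    by apply: leq_sum => tau _; apply: card_uncovered.
  by rewrite sum_nat_const card_word mulnC.
have few_crowded : 2 * \sum_(p : 'I_n.+1 * word n | r <= p.1) #|crowded p.1 p.2| < #|draws|.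
  rewrite -(ltn_pmul2r (expn_gt0 2 (6 * n.+1))) -mulnA big_distrl /=.
  apply: (@leq_ltn_trans (2 * (n.+1 * N * (#|draws| * 2 ^ 8)))).
    rewrite leq_mul2l /=.
    apply: (@leq_trans (\sum_(p : 'I_n.+1 * word n | r <= p.1) #|draws| * 2 ^ 8)).
      by apply: leq_sum => -[q tau] /= rq; apply: card_crowded; rewrite rq; exact: ltn_ord q.
    rewrite sum_nat_cond_const leq_mul2r; apply/orP; right.
    by apply: leq_trans (max_card _) _; rewrite card_prod card_ord card_word.
  rewrite (_ : 2 * _ = #|draws| * (2 ^ 9 * (n.+1 * N))); last by rewrite expnS; ring.
  by rewrite ltn_pmul2l // exp_margin_lt.
lia.
Qed.

Lemma exists_sparse_covering_code :
  exists C : {set word n}, [/\ #|C| = S, rcovering r C &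
    forall q, r <= q <= n -> forall tau, #|hball q tau :&: C| < k q].
Proof.
pose bad := (\bigcup_tau uncovered tau) :|:
  \bigcup_(p : 'I_n.+1 * word n | r <= p.1) crowded p.1 p.2.
have : ~~ (draws \subset bad).
  apply: contraTN card_bad_lt => /subset_leq_card draws_le_bad.
  rewrite -leqNgt (leq_trans draws_le_bad) //.
  exact: leq_trans (leq_card_setU _ _) (leq_add (leq_card_bigcup _ _) (leq_card_bigcup _ _)).
case/subsetPn => C; rewrite !inE => /eqP cC; rewrite negb_or => /andP[covered sparse].
exists C; split => // [tau | q /andP[rq qn] tau].
- have : C \notin uncovered tau by apply: contra covered => Cu; apply/bigcupP; exists tau.
  rewrite inE cC eqxx andbT -setI_eq0 => /set0Pn[s]; rewrite inE => /andP[sC].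
  by rewrite inE hdistC => rs; exists s.
- have : C \notin crowded q tau.
    by apply: contra sparse => Cc; apply/bigcupP; exists (Ordinal (qn : q < n.+1), tau).
  by rewrite inE cC eqxx andbT -ltnNge.
Qed.
End RandomCode.

Lemma abs_ceil_spec (R : realType) (y : R) : (0 <= y)%R ->
  [/\ ((`|Num.ceil y|%N)%:Z = Num.ceil y)%R, (y <= (`|Num.ceil y|%N)%:R)%R
    & ((`|Num.ceil y|%N)%:R < y + 1)%R].
Proof.
move=> y0.
have absE : ((`|Num.ceil y|%N)%:Z = Num.ceil y)%R by rewrite gez0_abs // ceil_ge0; lra.
have absRE : ((`|Num.ceil y|%N)%:R = (Num.ceil y)%:~R :> R)%R by rewrite -absE pmulrn.
by rewrite absRE ceil_ge; split=> //; have := ceilB1_lt y; rewrite intrD; lra.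
Qed.

Unset Implicit Arguments.

Theorem lemma3p1 (R : realType) (n r : nat) :
  (1 <= n)%N -> (0 < r)%N -> (r <= n)%N ->
  exists C : {set word n},
    @rcovering n r C /\
    (#|C|%:Z = Num.ceil (ln (2 : R) * (n.+1)%:R * (2 ^ n)%:R / (V n r)%:R))%R /\
    (forall q : nat, (r <= q <= n)%N -> forall tau : word n,
       (#|@hball n q tau :&: C|%:Z
          < Num.ceil (5 * (n.+1)%:R * (V n q)%:R / (V n r)%:R : R))%R).
Proof.
move=> n_gt0 r_gt0 _.
pose y q : R := (5 * (n.+1)%:R * (V n q)%:R / (V n r)%:R)%R.
have y_ge0 q : (0 <= y q)%R by rewrite !mulr_ge0 ?invr_ge0.
have x_ge0 : (0 <= ln (2 : R) * (n.+1)%:R * (2 ^ n)%:R / (V n r)%:R)%R.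
  by rewrite !mulr_ge0 ?invr_ge0 // ltW // ln2_gt0.
have [S_ceil x_le_S S_lt] := abs_ceil_spec x_ge0.
have y_le q : (y q <= (`|Num.ceil (y q)|%N)%:R)%R by case: (abs_ceil_spec (y_ge0 q)).
have [C [cardC covC sparseC]] := exists_sparse_covering_code
  (k := fun q => `|Num.ceil (y q)|%N) n_gt0 r_gt0 x_le_S S_lt (fun q _ => y_le q).
exists C; split => //; split; first by rewrite cardC.
move=> q rqn tau; have [<- _ _] := abs_ceil_spec (y_ge0 q).
by rewrite ltz_nat sparseC.
Qed.
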